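(* Let $n\ge1$ and let $\mathcal V$ be a variety with $n+2$ Gumm terms. Then $\mathcal V$ satisfies $$\alpha(\beta\circ\gamma\circ\beta\circ\gamma\circ\beta)\subseteq(\alpha\beta\circ_{4n-1}\alpha\gamma)\circ\alpha(\gamma\circ\beta)\circ(\alpha\gamma\circ_{2n}\alpha\beta),$$ and consequently $\mathcal V$ satisfies $\alpha(\beta\circ\alpha\gamma\circ\beta\circ\alpha\gamma\circ\beta)\subseteq\alpha\beta\circ_{6n+1}\alpha\gamma$.
   Context: Here $\alpha,\beta,\gamma$ range over congruences of algebras in $\mathcal V$. $\circ$ is relational composition, juxtaposition is intersection. For relations $X,Y$ and $m\ge1$, $X\circ_m Y$ denotes $X\circ Y\circ X\circ\cdots$ with $m$ factors. A variety has $n+2$ Gumm terms if it has ternary terms $p,j_1,\dots,j_{n+1}$ satisfying: $x=j_i(x,y,x)$ for all $i$; $x=p(x,z,z)$; $p(x,x,z)=j_1(x,x,z)$; $j_i(x,z,z)=j_{i+1}(x,z,z)$ for odd $i\le n$; $j_i(x,x,z)=j_{i+1}(x,x,z)$ for even $i\le n$; $j_{n+1}(x,y,z)=z$. *)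

From mathcomp Require Import all_boot.
Set Implicit Arguments. Unset Strict Implicit. Unset Printing Implicit Defensive.

Record signature := Signature { op_sym : Type; arity : op_sym -> nat }.

Record algebra (sig : signature) := Algebra {
  carrier :> Type;
  interp : forall f : op_sym sig, ('I_(arity f) -> carrier) -> carrier }.

Inductive term (sig : signature) (X : Type) : Type :=
  | Var : X -> term sig X
  | App : forall f : op_sym sig, ('I_(arity f) -> term sig X) -> term sig X.

Fixpoint eval (sig : signature) (A : algebra sig) (X : Type) (env : X -> A)
  (t : term sig X) : A :=
  match t with
  | Var x => env x
  | App f args => @interp sig A f (fun i => eval env (args i))
  end.

Definition satisfies_id (sig : signature) (A : algebra sig)
  (l r : term sig nat) : Prop :=
  forall env : nat -> A, eval env l = eval env r.

Definition in_variety (sig : signature) (Sigma : term sig nat -> term sig nat -> Prop)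
  (A : algebra sig) : Prop :=
  forall l r, Sigma l r -> satisfies_id A l r.

Definition eval3 (sig : signature) (A : algebra sig) (t : term sig nat) (x y z : A) : A :=
  eval (fun k => match k with 0 => x | 1 => y | _ => z end) t.

(** The variety defined by [Sigma] has n+2 Gumm terms p, j_1, ..., j_{n+1}. *)
Definition has_gumm_terms (sig : signature)
  (Sigma : term sig nat -> term sig nat -> Prop) (n : nat) : Prop :=
  exists (p : term sig nat) (j : nat -> term sig nat),
  forall A : algebra sig, in_variety Sigma A ->
    (forall i, 1 <= i <= n.+1 -> forall x y : A, eval3 (j i) x y x = x) /\
    [/\ (forall x z : A, eval3 p x z z = x),
        (forall x z : A, eval3 p x x z = eval3 (j 1) x x z),
        (forall i, 1 <= i <= n -> odd i -> forall x z : A,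
            eval3 (j i) x z z = eval3 (j i.+1) x z z),
        (forall i, 1 <= i <= n -> ~~ odd i -> forall x z : A,
            eval3 (j i) x x z = eval3 (j i.+1) x x z) &
        (forall x y z : A, eval3 (j n.+1) x y z = z)].

Definition relation (T : Type) := T -> T -> Prop.

Definition rcomp (T : Type) (X Y : relation T) : relation T :=
  fun a c => exists b, X a b /\ Y b c.

Definition rint (T : Type) (X Y : relation T) : relation T :=
  fun a b => X a b /\ Y a b.

Definition rincl (T : Type) (X Y : relation T) : Prop :=
  forall a b, X a b -> Y a b.

(** [rcomp_m m X Y] = X ∘ Y ∘ X ∘ ... with m factors (m >= 1);
    for m = 0 we use the diagonal (never used below). *)
Fixpoint rcomp_m (T : Type) (m : nat) (X Y : relation T) : relation T :=
  match m with
  | 0 => fun a b => a = b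
  | 1 => X
  | m'.+1 => rcomp X (rcomp_m m' Y X)
  end.

Definition is_congruence (sig : signature) (A : algebra sig) (R : relation A) : Prop :=
  [/\ (forall a, R a a),
      (forall a b, R a b -> R b a),
      (forall a b c, R a b -> R b c -> R a c) &
      (forall (f : op_sym sig) (u v : 'I_(arity f) -> A),
          (forall i, R (u i) (v i)) -> R (@interp sig A f u) (@interp sig A f v))].

From mathcomp Require Import all_boot zify.
Set Implicit Arguments. Unset Strict Implicit. Unset Printing Implicit Defensive.

(* Let a beta b gamma c beta d gamma e beta f with a alpha f, and put
   u := j_1(f,d,a), x := j_1(f,e,a), v := j_1(x,x,f). Since j_i(f,w,f) = f, the
   map w |-> j_i(f,w,a) sends beta- and gamma-steps to alpha/\beta- and
   alpha/\gamma-steps. Applying it to the path d ... a for i = 1 and to the whole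
   path a ... f for 2 <= i <= n, and gluing the images along the Gumm identities
   j_i(f,a,a) = j_(i+1)(f,a,a) (i odd), j_i(f,f,a) = j_(i+1)(f,f,a) (i even),
   joins a to u in 4n-1 steps. In the same way the maps w |-> j_i(x,w,f) applied
   to x beta p(f,e,b) gamma p(f,d,c) beta f join v to f in 2n+1 steps; the first
   of them is absorbed by the middle link
   u gamma x gamma p(x, p(f,e,b), p(f,d,c)) beta p(x,p(f,e,b),f) beta v.
   The second inclusion is the first one for alpha /\ gamma in place of gamma,
   with the middle link split into an alpha/\gamma- and an alpha/\beta-step. *)

Section Congruences.
Variables (sig : signature) (A : algebra sig) (R : relation A).
Hypothesis congR : is_congruence R.

Lemma cong_refl a : R a a.
Proof. by case: congR. Qed.

Lemma cong_sym a b : R a b -> R b a.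
Proof. by case: congR => _ symR _ _; apply: symR. Qed.

Lemma cong_trans a b c : R a b -> R b c -> R a c.
Proof. by case: congR => _ _ transR _; apply: transR. Qed.

Lemma cong_eval (t : term sig nat) (e1 e2 : nat -> A) :
  (forall k, R (e1 k) (e2 k)) -> R (eval e1 t) (eval e2 t).
Proof.
case: congR => _ _ _ compR Re; elim: t => [k|f args IH] /=; first exact: Re.
by apply: compR => i; apply: IH.
Qed.

Lemma cong_eval3 (t : term sig nat) (x y z x' y' z' : A) :
  R x x' -> R y y' -> R z z' -> R (eval3 t x y z) (eval3 t x' y' z').
Proof. by move=> Rx Ry Rz; apply: cong_eval => -[|[|k]]. Qed.

End Congruences.

Lemma cong_rint sig (A : algebra sig) (R S : relation A) :
  is_congruence R -> is_congruence S -> is_congruence (rint R S).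
Proof.
move=> congR congS; split.
- by move=> a; split; apply: cong_refl.
- by move=> a b [Rab Sab]; split; apply: cong_sym.
- move=> a b c [Rab Sab] [Rbc Sbc].
  by split; [apply: cong_trans Rbc | apply: cong_trans Sbc].
- case: congR congS => _ _ _ compR [_ _ _ compS] f u v RSuv.
  by split; [apply: compR => i | apply: compS => i]; case: (RSuv i).
Qed.

Lemma rcomp_m_map (T U : Type) (F : T -> U) (X Y : relation T) (X' Y' : relation U) k a b :
  (forall s t, X s t -> X' (F s) (F t)) -> (forall s t, Y s t -> Y' (F s) (F t)) ->
  rcomp_m k X Y a b -> rcomp_m k X' Y' (F a) (F b).
Proof.
elim: k X Y X' Y' a => [|[|k] IH] X Y X' Y' a FX FY; first by move=> /= ->.
  exact: FX.
case=> s [Xas Ysb]; exists (F s); split; first exact: FX.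
exact: IH Ysb.
Qed.

Section AlternatingChains.
Variables (T : Type) (X Y : relation T).

Lemma rcomp_m_glue k l a b c d :
  rcomp_m k.*2.+1 X Y a b -> Y b c -> rcomp_m l.*2.+1 X Y c d ->
  rcomp_m (k + l).+1.*2.+1 X Y a d.
Proof.
elim: k a => [|k IH] a.
  by rewrite add0n => Xab Ybc Xcd; exists b; split => //; exists c.
rewrite addSn doubleS => -[s [Xas [t [Yst Xtb]]]] Ybc Xcd.
by exists s; split => //; exists t; split => //; apply: IH Ybc Xcd.
Qed.

Hypothesis X_trans : forall a b c, X a b -> X b c -> X a c.

Lemma rcomp_m_cat k l a b c :
  rcomp_m k.*2.+1 X Y a b -> rcomp_m l.*2.+1 X Y b c ->
  rcomp_m (k + l).*2.+1 X Y a c.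
Proof.
elim: k a => [|k IH] a; last first.
  rewrite addSn doubleS => -[s [Xas [t [Yst Xtb]]]] Xbc.
  by exists s; split => //; exists t; split => //; apply: IH Xtb Xbc.
rewrite add0n; case: l => [|l] Xab; first exact: X_trans.
rewrite doubleS => -[s [Xbs Ysc]]; exists s; split => //; exact: X_trans Xbs.
Qed.

Hypotheses (X_sym : forall a b, X a b -> X b a) (Y_sym : forall a b, Y a b -> Y b a).

Lemma rcomp_m_odd_sym k a b : rcomp_m k.*2.+1 X Y a b -> rcomp_m k.*2.+1 X Y b a.
Proof.
elim: k a b => [|k IH] a b; first exact: X_sym.
rewrite doubleS => -[s [Xas [t [Yst Xtb]]]].
have := rcomp_m_glue (IH _ _ Xtb) (Y_sym Yst) (X_sym Xas : rcomp_m 0.*2.+1 X Y s a).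
by rewrite addn0.
Qed.

Hypothesis X_refl : forall a, X a a.

(* Paths g_i(u) ~ g_i(v) linked alternately at their v-ends (i odd) and u-ends
   (i even) form one zigzag path. *)
Lemma rcomp_m_zigzag (g : nat -> T -> T) u v L m :
  (forall i, 1 <= i <= m -> rcomp_m L.*2.+1 X Y (g i u) (g i v)) ->
  (forall i, 1 <= i <= m -> odd i -> g i v = g i.+1 v) ->
  (forall i, 1 <= i <= m -> ~~ odd i -> g i u = g i.+1 u) ->
  rcomp_m (L * m).*2.+1 X Y (g 1 u) (g m.+1 (if odd m then v else u)).
Proof.
elim: m => [|m IH] path link_v link_u; first by rewrite muln0.
have range_le i : 1 <= i <= m -> 1 <= i <= m.+1 by lia.
have {}IH := IH (fun i Hi => path i (range_le i Hi))
  (fun i Hi => link_v i (range_le i Hi)) (fun i Hi => link_u i (range_le i Hi)).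
have seg := path m.+1 (leqnn _).
rewrite mulnS addnC oddS; case: (boolP (odd m)) IH => odd_m IH.
- simpl (~~ true); rewrite -(link_u m.+1) ?oddS ?odd_m ?leqnn //.
  exact: rcomp_m_cat IH (rcomp_m_odd_sym seg).
- simpl (~~ false); rewrite -(link_v m.+1) ?oddS ?leqnn //.
  exact: rcomp_m_cat IH seg.
Qed.

End AlternatingChains.

Section TermImages.
Variables (sig : signature) (A : algebra sig) (al : relation A).
Hypothesis congal : is_congruence al.
Variables (t : term sig nat) (x z : A).
Hypotheses (t_idem : forall w, eval3 t x w x = x) (al_zx : al z x).

Lemma eval3_anchor w : al (eval3 t x w z) x.
Proof. by rewrite -{2}(t_idem w); apply: cong_eval3 => //; apply: cong_refl. Qed.

Lemma rint_eval3 (R : relation A) w w' :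
  is_congruence R -> R w w' -> rint al R (eval3 t x w z) (eval3 t x w' z).
Proof.
move=> congR Rww'; split; last by apply: cong_eval3 => //; apply: cong_refl.
exact: cong_trans (eval3_anchor w) (cong_sym congal (eval3_anchor w')).
Qed.

Lemma rcomp_m_eval3 (be ga : relation A) k w w' :
  is_congruence be -> is_congruence ga -> rcomp_m k be ga w w' ->
  rcomp_m k (rint al be) (rint al ga) (eval3 t x w z) (eval3 t x w' z).
Proof.
move=> congbe congga; apply: (rcomp_m_map (F := fun w => eval3 t x w z)) => s s'.
all: exact: rint_eval3.
Qed.

End TermImages.

Definition gumm_identities (sig : signature) (A : algebra sig) (p : term sig nat)
    (j : nat -> term sig nat) (n : nat) : Prop :=
  (forall i, 1 <= i <= n.+1 -> forall x y : A, eval3 (j i) x y x = x) /\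
  [/\ (forall x z : A, eval3 p x z z = x),
      (forall x z : A, eval3 p x x z = eval3 (j 1) x x z),
      (forall i, 1 <= i <= n -> odd i -> forall x z : A,
          eval3 (j i) x z z = eval3 (j i.+1) x z z),
      (forall i, 1 <= i <= n -> ~~ odd i -> forall x z : A,
          eval3 (j i) x x z = eval3 (j i.+1) x x z) &
      (forall x y z : A, eval3 (j n.+1) x y z = z)].

Section GummChains.
Variables (sig : signature) (A : algebra sig) (p : term sig nat) (j : nat -> term sig nat).
Variable m : nat.
Hypothesis j_idem : forall i, 1 <= i <= m.+2 -> forall x y : A, eval3 (j i) x y x = x.
Hypothesis p_xzz : forall x z : A, eval3 p x z z = x.
Hypothesis p_xxz : forall x z : A, eval3 p x x z = eval3 (j 1) x x z.
Hypothesis j_odd : forall i, 1 <= i <= m.+1 -> odd i -> forall x z : A,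
  eval3 (j i) x z z = eval3 (j i.+1) x z z.
Hypothesis j_even : forall i, 1 <= i <= m.+1 -> ~~ odd i -> forall x z : A,
  eval3 (j i) x x z = eval3 (j i.+1) x x z.
Hypothesis j_last : forall x y z : A, eval3 (j m.+2) x y z = z.

Variables al be ga : relation A.
Hypotheses (congal : is_congruence al) (congbe : is_congruence be).
Hypothesis congga : is_congruence ga.
Local Notation P := (rint al be).
Local Notation Q := (rint al ga).

Let congP : is_congruence P := cong_rint congal congbe.
Let congQ : is_congruence Q := cong_rint congal congga.

Lemma gumm_left_chain a d f :
  al a f -> rcomp_m 1.*2.+1 be ga a d -> rcomp_m 2.*2.+1 be ga a f ->
  rcomp_m m.*2.+1.*2.+1 P Q a (eval3 (j 1) f d a).
Proof.
move=> al_af chain_ad chain_af.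
have head : rcomp_m 1.*2.+1 P Q (eval3 (j 1) f d a) (eval3 (j 2) f a a).
  rewrite -j_odd //; apply: (rcomp_m_eval3 congal (@j_idem 1 _ f)) => //.
  exact: (rcomp_m_odd_sym (cong_sym congbe) (cong_sym congga) chain_ad).
have body : rcomp_m (2 * m).*2.+1 P Q (eval3 (j 2) f a a) a.
  have := rcomp_m_zigzag (cong_trans congP) (cong_sym congP) (cong_sym congQ)
    (cong_refl congP) (g := fun i w => eval3 (j i.+1) f w a) (u := a) (v := f) (L := 2)
    (m := m).
  rewrite j_last; apply => [i Hi | i Hi odd_i | i Hi even_i].
  - by apply: (rcomp_m_eval3 congal (@j_idem i.+1 _ f)) => //; lia.
  - by apply: j_even; [lia | rewrite oddS odd_i].
  - by apply: j_odd; [lia | rewrite oddS].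
have := rcomp_m_cat (cong_trans congP) head body.
by move/(rcomp_m_odd_sym (cong_sym congP) (cong_sym congQ)); rewrite add1n mul2n.
Qed.

Lemma gumm_right_chain x z :
  al z x -> rcomp_m 1.*2.+1 be ga x z -> rcomp_m m.+1.*2.+1 P Q (eval3 (j 1) x x z) z.
Proof.
move=> al_zx chain_xz.
have := rcomp_m_zigzag (cong_trans congP) (cong_sym congP) (cong_sym congQ)
  (cong_refl congP) (g := fun i w => eval3 (j i) x w z) (u := x) (v := z) (L := 1) (m := m.+1).
rewrite j_last mul1n; apply => [i Hi | i Hi odd_i | i Hi even_i].
- by apply: (rcomp_m_eval3 congal (@j_idem i _ x)) => //; lia.
- exact: j_odd.
- exact: j_even.
Qed.

Lemma gumm_chain_decomposition a b c d e f :
  al a f -> be a b -> ga b c -> be c d -> ga d e -> be e f ->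
  exists u v, [/\ rcomp_m m.*2.+1.*2.+1 P Q a u, rint al (rcomp ga be) u v &
                  rcomp_m m.*2.+2 Q P v f].
Proof.
move=> al_af be_ab ga_bc be_cd ga_de be_ef.
have [reflbe symbe transbe _] := congbe; have [reflga symga transga _] := congga.
set x := eval3 (j 1) f e a; set y := eval3 p f e b; set y' := eval3 p f d c.
set q := eval3 p x y y'; set v0 := eval3 (j 1) x x f.
have al_fx : al f x := cong_sym congal (eval3_anchor congal (@j_idem 1 erefl f) al_af e).
have be_xy : be x y.
  apply: transbe (cong_eval3 congbe (j 1) (reflbe f) be_ef (reflbe a)) _.
  by rewrite -p_xxz; exact: (cong_eval3 congbe p (reflbe f) (symbe _ _ be_ef) be_ab).
have ga_yy' : ga y y' := cong_eval3 congga p (reflga f) (symga _ _ ga_de) ga_bc.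
have be_y'f : be y' f.
  rewrite -[X in be _ X](p_xzz f c).
  exact: (cong_eval3 congbe p (reflbe f) (symbe _ _ be_cd) (reflbe c)).
have [v [[al_v0v be_v0v] Qvf]] : rcomp P (rcomp_m m.*2.+2 Q P) v0 f.
  by apply: gumm_right_chain => //; exists y; split => //; exists y'.
have ga_xq : ga x q.
  by rewrite -[X in ga X _](p_xzz x y); exact: (cong_eval3 congga p (reflga x) (reflga y) ga_yy').
have be_qv0 : be q v0.
  apply: transbe (cong_eval3 congbe p (reflbe x) (reflbe y) be_y'f) _.
  by rewrite /v0 -p_xxz; exact: (cong_eval3 congbe p (reflbe x) (symbe _ _ be_xy) (reflbe f)).
have al_uv : al (eval3 (j 1) f d a) v.
  have al_uf := eval3_anchor congal (@j_idem 1 erefl f) al_af d.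
  have al_xv0 := cong_sym congal (eval3_anchor congal (@j_idem 1 erefl x) al_fx x).
  exact: (cong_trans congal al_uf (cong_trans congal al_fx (cong_trans congal al_xv0 al_v0v))).
exists (eval3 (j 1) f d a), v; split => //.
  apply: gumm_left_chain => //; first by exists b; split => //; exists c.
  by exists b; split => //; exists c; split => //; exists d; split => //; exists e.
split => //; exists q; split; last exact: transbe be_qv0 be_v0v.
exact: transga (cong_eval3 congga (j 1) (reflga f) ga_de (reflga a)) ga_xq.
Qed.

End GummChains.

Lemma gumm_shift sig (A : algebra sig) p j n :
  0 < n -> gumm_identities A p j n ->
  forall al be ga : relation A,
    is_congruence al -> is_congruence be -> is_congruence ga ->
    rincl (rint al (rcomp be (rcomp ga (rcomp be (rcomp ga be)))))
          (rcomp (rcomp_m (4 * n - 1) (rint al be) (rint al ga))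
                 (rcomp (rint al (rcomp ga be))
                        (rcomp_m (2 * n) (rint al ga) (rint al be)))).
Proof.
case: n => // m _ [j_idem [p_xzz p_xxz j_odd j_even j_last]] al be ga congal congbe congga.
move=> a f [al_af [b [be_ab [c [ga_bc [d [be_cd [e [ga_de be_ef]]]]]]]]].
have [u [v [Pau middle_uv QPvf]]] := gumm_chain_decomposition j_idem p_xzz p_xxz j_odd
  j_even j_last congal congbe congga al_af be_ab ga_bc be_cd ga_de be_ef.
have -> : 4 * m.+1 - 1 = m.*2.+1.*2.+1 by lia.
have -> : 2 * m.+1 = m.*2.+2 by lia.
by exists u; split => //; exists v.
Qed.

Lemma gumm_shift_rint sig (A : algebra sig) p j n :
  0 < n -> gumm_identities A p j n ->
  forall al be ga : relation A,
    is_congruence al -> is_congruence be -> is_congruence ga ->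
    rincl (rint al (rcomp be (rcomp (rint al ga) (rcomp be (rcomp (rint al ga) be)))))
          (rcomp_m (6 * n + 1) (rint al be) (rint al ga)).
Proof.
move=> n_gt0 gumm al be ga congal congbe congga a f chain_af.
have [u [Pau [v [[al_uv [w [Quw be_wv]]] QPvf]]]] :=
  gumm_shift n_gt0 gumm congal congbe (cong_rint congal congga) chain_af.
case: n n_gt0 {gumm} Pau QPvf => // m _ Pau QPvf.
have weaken s t : rint al (rint al ga) s t -> rint al ga s t by case.
have {}Pau : rcomp_m m.*2.+1.*2.+1 (rint al be) (rint al ga) a u.
  have -> : m.*2.+1.*2.+1 = 4 * m.+1 - 1 by lia.
  exact: (rcomp_m_map (F := id) (fun _ _ => id) weaken Pau).
have [s [Qvs Psf]] : rcomp_m m.*2.+2 (rint al ga) (rint al be) v f.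
  have -> : m.*2.+2 = 2 * m.+1 by lia.
  exact: (rcomp_m_map (F := id) weaken (fun _ _ => id) QPvf).
have Pwv : rint al be w v := conj (cong_trans congal (cong_sym congal Quw.1) al_uv) be_wv.
have := rcomp_m_glue (rcomp_m_glue Pau Quw (Pwv : rcomp_m 0.*2.+1 _ _ w v)) Qvs Psf.
by have -> : 6 * m.+1 + 1 = ((m.*2.+1 + 0).+1 + m).+1.*2.+1 by lia.
Qed.

Theorem mainTheorem13 (sig : signature)
  (Sigma : term sig nat -> term sig nat -> Prop) (n : nat) :
  1 <= n -> has_gumm_terms Sigma n ->
  forall (A : algebra sig), in_variety Sigma A ->
  forall al be ga : relation A,
    is_congruence al -> is_congruence be -> is_congruence ga ->
    rincl (rint al (rcomp be (rcomp ga (rcomp be (rcomp ga be)))))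
          (rcomp (rcomp_m (4 * n - 1) (rint al be) (rint al ga))
                 (rcomp (rint al (rcomp ga be))
                        (rcomp_m (2 * n) (rint al ga) (rint al be))))
    /\
    rincl (rint al (rcomp be (rcomp (rint al ga) (rcomp be (rcomp (rint al ga) be)))))
          (rcomp_m (6 * n + 1) (rint al be) (rint al ga)).
Proof.
move=> n_gt0 [p [j gumm]] A A_in al be ga congal congbe congga.
have gummA : gumm_identities A p j n := gumm A A_in.
split; [exact: (gumm_shift n_gt0 gummA) | exact: (gumm_shift_rint n_gt0 gummA)].
Qed.
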